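(* Let $S$ be a sticky tree with $n+1$ nodes ($n\ge1$), let $v_1,\dots,v_n$ be its non-root nodes listed in prefix order, and let $c$ be its certificate-counting function. Let $\mathrm{E}(S)$ be the contour word of $S$ and $\mathrm{D}(S)=u\,d^{c(v_1)}\,u\,d^{c(v_2)}\cdots u\,d^{c(v_n)}$. Then $\mathrm{D}(S)$ and $\mathrm{E}(S)$ are Dyck paths of length $2n$ and $\mathrm{D}(S)\preceq_T \mathrm{E}(S)$, i.e. $[\mathrm{D}(S),\mathrm{E}(S)]$ is an interval of the Tamari lattice of order $n$.
   Context: Sticky trees: a plane tree is a rooted tree in which the children of every node are linearly ordered (left to right). The root has depth $0$, a child of a node of depth $d$ has depth $d+1$. The prefix order is: the root, followed by the prefix order of the subtree of its leftmost child, then of its second child, and so on. $S_u$ denotes the subtree rooted at $u$. A sticky tree is a plane tree $S$ with node set $V$ and a labeling $\ell:V\to\mathbb{N}$ such that: (1) every node $u$ of depth $d$ has $0\le\ell(u)\le d$; (2) every node $u$ of depth $d>0$ has some $v\in S_u$ (possibly $v=u$) with $\ell(v)<d$; (3) for every node $u$ of depth $d$, if some $v\in S_u$ has $\ell(v)=d$, then every node of $S_u$ (including $u$) preceding $v$ in prefix order has label at least $d$. The certificate of a non-root node $u$ of depth $d$ is the first node, in prefix order, of $S_u$ whose label is $<d$. The certificate-counting function $c:V\to\mathbb{N}$ assigns to each node $w$ the number of non-root nodes whose certificate is $w$. Contour word: $\mathrm{E}(S)$ is the word in $\{u,d\}$ obtained by the depth-first traversal of $S$ starting at the root and visiting children from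 left to right, writing $u$ each time one moves from a node to a child and $d$ each time one moves back from a child to its parent. Dyck paths and Tamari lattice: a Dyck path of length $2n$ is a word in $\{u,d\}$ with $n$ letters $u$ and $n$ letters $d$ such that every prefix has at least as many $u$'s as $d$'s. The $i$-th letter $u$ (call it $u_i$) of a Dyck path $D$ is matched with the letter $d$ following it such that the factor $D_i$ strictly between them is itself a Dyck path (balanced); $\ell_D(i)$ denotes the length of $D_i$. For Dyck paths $D,E$ of length $2n$, $D\preceq_T E$ iff $\ell_D(i)\le \ell_E(i)$ for all $1\le i\le n$; this is the Tamari lattice of order $n$, and a pair $[D,E]$ with $D\preceq_T E$ is a Tamari interval. *)

From mathcomp Require Import all_boot.
Set Implicit Arguments. Unset Strict Implicit. Unset Printing Implicit Defensive.

Inductive ltree := LNode of nat & seq ltree.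

Definition label (t : ltree) : nat := let: LNode l _ := t in l.
Definition children (t : ltree) : seq ltree := let: LNode _ cs := t in cs.

(* All nodes in prefix order, each given as (depth, subtree rooted at it);
   the root of [t] is given depth [d]. *)
Fixpoint subtrees (d : nat) (t : ltree) : seq (nat * ltree) :=
  let: LNode _ cs := t in (d, t) :: flatten (map (subtrees d.+1) cs).

Definition nnodes (t : ltree) : nat := size (subtrees 0 t).

Definition labels (t : ltree) : seq nat := map (fun p => label p.2) (subtrees 0 t).

Definition sticky (S : ltree) : Prop :=
  forall i, i < nnodes S ->
    let d := (nth (0, S) (subtrees 0 S) i).1 in
    let u := (nth (0, S) (subtrees 0 S) i).2 in
    [/\ label u <= d,
        0 < d -> has (fun l => l < d) (labels u)
      & forall k, k < size (labels u) -> nth 0 (labels u) k = d ->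
                  forall j, j <= k -> d <= nth 0 (labels u) j ].

(* Nodes are identified with their index in prefix order (root = 0).
   The subtree S_u of the node of index i occupies indices i .. i+|S_u|-1,
   so the certificate of a non-root node of index i and depth d is the node
   of index i + (position of the first label < d in the prefix order of S_u). *)
Definition certificate (S : ltree) (i : nat) : nat :=
  let p := nth (0, S) (subtrees 0 S) i in
  i + find (fun l => l < p.1) (labels p.2).

Definition cert_count (S : ltree) (w : nat) : nat :=
  count (fun i => certificate S i == w) (iota 1 (nnodes S).-1).

Notation up := true.
Notation down := false.

Fixpoint contour (t : ltree) : seq bool :=
  let: LNode _ cs := t in flatten (map (fun c => up :: rcons (contour c) down) cs).

Definition Dword (S : ltree) : seq bool :=
  flatten [seq up :: nseq (cert_count S k) down | k <- iota 1 (nnodes S).-1].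

Definition nup (w : seq bool) : nat := count (pred1 up) w.
Definition ndown (w : seq bool) : nat := count (pred1 down) w.

Definition dyck (w : seq bool) : bool :=
  (nup w == ndown w) && all (fun k => ndown (take k w) <= nup (take k w)) (iota 0 (size w).+1).

Definition dyck_path (n : nat) (w : seq bool) : bool :=
  (size w == 2 * n) && (nup w == n) && dyck w.

(* Position (0-based) of the i-th letter u (i >= 1). *)
Definition pos_up (w : seq bool) (i : nat) : nat :=
  nth 0 [seq k <- iota 0 (size w) | nth down w k == up] i.-1.

(* Length of the factor following a u up to its matching d: the least m such
   that the first m letters form a Dyck word and the next letter is d. *)
Definition match_len (s : seq bool) : nat :=
  find (fun m => dyck (take m s) && (nth up s m == down)) (iota 0 (size s)).

Definition ell (w : seq bool) (i : nat) : nat := match_len (drop (pos_up w i).+1 w).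

Definition tamari_le (n : nat) (D E : seq bool) : Prop :=
  forall i, 1 <= i <= n -> ell D i <= ell E i.

(* In E(S) the letter u entering the
   node v_i is matched by the d leaving it, so the factor between them is the
   contour of S_{v_i}, of length 2(|S_{v_i}| - 1).  In D(S) the block of v_i
   carries one d per node certified by v_i; since a certificate lies in the
   subtree of the node it certifies and never before it, the |S_{v_i}| nodes of
   S_{v_i} contribute |S_{v_i}| letters d right after the u of v_i, ahead of
   only |S_{v_i}| - 1 further letters u.  Hence the u of v_i is matched within
   2(|S_{v_i}| - 1) letters, and the same counting shows that D(S) is a Dyck
   path. *)
From mathcomp Require Import all_boot zify.
Set Implicit Arguments. Unset Strict Implicit. Unset Printing Implicit Defensive.

Lemma nup_cat a b : nup (a ++ b) = nup a + nup b.
Proof. by rewrite /nup count_cat. Qed.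

Lemma ndown_cat a b : ndown (a ++ b) = ndown a + ndown b.
Proof. by rewrite /ndown count_cat. Qed.

Lemma nup_cons x w : nup (x :: w) = x + nup w.
Proof. by case: x. Qed.

Lemma ndown_cons x w : ndown (x :: w) = ~~ x + ndown w.
Proof. by case: x. Qed.

Lemma nup_nseq_down k : nup (nseq k down) = 0.
Proof. by rewrite /nup count_nseq. Qed.

Lemma ndown_nseq_down k : ndown (nseq k down) = k.
Proof. by rewrite /ndown count_nseq mul1n. Qed.

Lemma size_nup_ndown w : size w = nup w + ndown w.
Proof. by elim: w => // b w IH; rewrite nup_cons ndown_cons /= IH; case: b => /=; lia. Qed.

Lemma nup_take m w : nup (take m w) <= nup w.
Proof. by rewrite -{2}(cat_take_drop m w) nup_cat leq_addr. Qed.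

Definition balanced (w : seq bool) : Prop :=
  nup w = ndown w /\ forall m, ndown (take m w) <= nup (take m w).

Lemma dyckP w : reflect (balanced w) (dyck w).
Proof.
apply: (iffP andP) => [[/eqP eud /allP pre] | [-> pre]]; last first.
  by split=> //; apply/allP => k _.
split=> // m; case: (leqP m (size w)) => hm.
  by have := pre m; rewrite mem_iota; apply; lia.
by rewrite take_oversize ?eud // ltnW.
Qed.

Lemma dyck_path_balanced n w : nup w = n -> balanced w -> dyck_path n w.
Proof.
move=> eu hb; have [eud _] := hb.
by rewrite /dyck_path size_nup_ndown -eud eu addnn -mul2n !eqxx; apply/dyckP.
Qed.

Lemma find_iota_le (a : pred nat) N m : m < N -> a m -> find a (iota 0 N) <= m.
Proof.
move=> hm am; rewrite leqNgt; apply/negP => /(before_find 0).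
by rewrite nth_iota // add0n am.
Qed.

Lemma find_iota_sat (a : pred nat) N : find a (iota 0 N) < N -> a (find a (iota 0 N)).
Proof.
move=> h; have hs : has a (iota 0 N) by rewrite has_find size_iota.
by have := nth_find 0 hs; rewrite nth_iota ?add0n.
Qed.

Lemma match_len_balanced_cat x r : balanced x -> match_len (x ++ down :: r) = size x.
Proof.
move=> [hx hp]; rewrite /match_len.
set a := (fun m => _).
have ha : a (size x).
  by rewrite /a take_size_cat // nth_cat ltnn subnn eqxx andbT; apply/dyckP.
have hsz : size x < size (x ++ down :: r) by rewrite size_cat /=; lia.
apply/eqP; rewrite eqn_leq find_iota_le //=.
rewrite leqNgt; apply/negP => hlt.
have := find_iota_sat (ltn_trans hlt hsz); set f := find _ _ in hlt *.
rewrite /a take_cat nth_cat hlt => /andP [/dyckP [e _] /eqP hd].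
have := hp f.+1; rewrite (take_nth up) ?hd; last lia.
by rewrite -cats1 nup_cat ndown_cat e /=; lia.
Qed.

(* Just before the d's first outnumber the u's, [X ++ Y] has a balanced prefix
   followed by a d, and that prefix lies inside [X]; so the match ends inside [X],
   where a balanced prefix has at most [2 * nup X] letters. *)
Lemma match_len_cat_le X Y : nup X < ndown X -> match_len (X ++ Y) <= 2 * nup X.
Proof.
move=> hX; set s := X ++ Y.
pose P p := nup (take p s) < ndown (take p s).
have exP : exists p, P p by exists (size X); rewrite /P /s take_size_cat.
case: (ex_minnP exP) => p Pp pmin.
have pX : p <= size X by apply: pmin; rewrite /P /s take_size_cat.
have p0 : 0 < p by move: Pp; rewrite /P; case: p {pmin pX} => //; rewrite take0.
set m := p.-1.
have hms : m < size s by rewrite /s size_cat; lia.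
have nPm k : k <= m -> ndown (take k s) <= nup (take k s).
  by move=> hk; rewrite leqNgt; apply/negP => /pmin; lia.
have tp : take p s = rcons (take m s) (nth up s m) by rewrite -(take_nth up) // prednK.
move: (Pp); rewrite /P tp -cats1 nup_cat ndown_cat.
have := nPm m (leqnn m).
case hn: (nth up s m) => /= h1 h2; first lia.
have dm : balanced (take m s).
  by split=> [|k]; [lia | rewrite -take_min; apply: nPm; lia].
pose a m := dyck (take m s) && (nth up s m == down).
have am : a m by rewrite /a hn eqxx andbT; apply/dyckP.
have hf := find_iota_le hms am.
rewrite /match_len -/s -/a; set f := find _ _ in hf *.
have := find_iota_sat (leq_ltn_trans hf hms); rewrite -/f => /andP [/dyckP [e _] _].
have -> : f = size (take f s) by rewrite size_take; case: ifP => //; lia.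
rewrite size_nup_ndown -e.
have -> : take f s = take f X by rewrite /s take_cat; case: ifP => //; lia.
by have := nup_take f X; lia.
Qed.

Lemma pos_up_cat a w : pos_up (a ++ up :: w) (nup a).+1 = size a.
Proof.
rewrite /pos_up /= size_cat /= iotaD filter_cat add0n.
have -> : [seq k <- iota 0 (size a) | nth down (a ++ up :: w) k == up] =
          [seq k <- iota 0 (size a) | nth down a k == up].
  by apply: eq_in_filter => k; rewrite mem_iota => hk; rewrite nth_cat; case: ifP => //; lia.
rewrite nth_cat size_filter.
have -> : count (fun k => nth down a k == up) (iota 0 (size a)) = nup a.
  by rewrite /nup -{3}(mkseq_nth down a) /mkseq count_map.
by rewrite ltnn subnn /= nth_cat ltnn subnn eqxx.
Qed.

Lemma ell_cat a w : ell (a ++ up :: w) (nup a).+1 = match_len w.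
Proof. by rewrite /ell pos_up_cat -cat_rcons drop_size_cat // size_rcons. Qed.

Fixpoint ltree_cons_ind (P : ltree -> Prop) (H0 : forall l, P (LNode l [::]))
  (H1 : forall l c cs, P c -> P (LNode l cs) -> P (LNode l (c :: cs))) t : P t :=
  let: LNode l cs := t in
  (fix G cs : P (LNode l cs) :=
     match cs with
     | [::] => H0 l
     | c :: cs' => H1 l c cs' (ltree_cons_ind H0 H1 c) (G cs')
     end) cs.

Lemma subtrees_cons d l c cs : subtrees d (LNode l (c :: cs)) =
  (d, LNode l (c :: cs)) :: subtrees d.+1 c ++ behead (subtrees d (LNode l cs)).
Proof. by []. Qed.

Lemma subtrees_head d t : subtrees d t = (d, t) :: behead (subtrees d t).
Proof. by case: t. Qed.

Lemma size_subtrees d t : size (subtrees d t) = nnodes t.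
Proof.
rewrite /nnodes; elim/ltree_cons_ind: t d => // l c cs IHc IHr d.
rewrite !subtrees_cons /= !size_cat IHc.
have := IHr d; have := IHr 0.
rewrite [subtrees d _]subtrees_head [subtrees 0 (LNode l cs)]subtrees_head /=.
by have := IHc 1; lia.
Qed.

Lemma nnodes_gt0 t : 0 < nnodes t.
Proof. by rewrite /nnodes subtrees_head. Qed.

Lemma nnodes_cons l c cs : nnodes (LNode l (c :: cs)) = nnodes c + nnodes (LNode l cs).
Proof.
rewrite -(size_subtrees 0) subtrees_cons /= size_cat (size_subtrees _ c).
rewrite -(size_subtrees 0 (LNode l cs)) [subtrees 0 (LNode l cs)]subtrees_head /=.
by have := nnodes_gt0 c; lia.
Qed.

Lemma subtrees_depth_gt d t : all (fun p => d < p.1) (behead (subtrees d t)).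
Proof.
elim/ltree_cons_ind: t d => // l c cs IHc IHr d.
rewrite subtrees_cons /= all_cat IHr andbT subtrees_head /= ltnSn /=.
by apply: sub_all (IHc d.+1) => p /= h; apply: ltn_trans h.
Qed.

Lemma drop_subtrees d t x0 i : i < nnodes t ->
  exists r, drop i (subtrees d t) =
    subtrees (nth x0 (subtrees d t) i).1 (nth x0 (subtrees d t) i).2 ++ r.
Proof.
rewrite -(size_subtrees d); case: i => [|i] h.
  by exists [::]; rewrite drop0 cats0 {2 3}subtrees_head.
elim/ltree_cons_ind: t d i h => [l d i|l c cs IHc IHr d i]; first by [].
rewrite subtrees_cons /= size_cat => h.
rewrite drop_cat nth_cat; case: ifP => hi.
  case: i hi {h} => [|i] hi.
    by exists (behead (subtrees d (LNode l cs))); rewrite drop0 {2 3}subtrees_head.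
  have [r ->] := IHc d.+1 i hi.
  by exists (r ++ behead (subtrees d (LNode l cs))); rewrite catA.
have h' : (i - size (subtrees d.+1 c)).+1 < size (subtrees d (LNode l cs)).
  by rewrite [subtrees d (LNode l cs)]subtrees_head /=; move: hi => /negbT; lia.
by have := IHr d _ h'; rewrite [subtrees d (LNode l cs)]subtrees_head.
Qed.

Definition node (t : ltree) (i : nat) : nat * ltree := nth (0, t) (subtrees 0 t) i.

Lemma node0 t : node t 0 = (0, t).
Proof. by rewrite /node subtrees_head. Qed.

Lemma node_depth_gt0 t j : 0 < j < nnodes t -> 0 < (node t j).1.
Proof.
case/andP => hj0 hj; have /(all_nthP (0, t)) := subtrees_depth_gt 0 t.
rewrite /node -(prednK hj0) -nth_behead; apply.
by rewrite size_behead size_subtrees; lia.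
Qed.

Lemma subtree_nested t i j : i < nnodes t -> i <= j < i + nnodes (node t i).2 ->
  j + nnodes (node t j).2 <= i + nnodes (node t i).2.
Proof.
move=> hi hj; have [r hr] := drop_subtrees 0 (0, t) hi.
rewrite -/(node t i) in hr; set T := node t i in hj hr *.
have hk : j - i < nnodes T.2 by lia.
have eq : node t j = nth (0, t) (subtrees T.1 T.2) (j - i).
  have := nth_drop i (0, t) (subtrees 0 t) (j - i).
  by rewrite hr nth_cat size_subtrees hk subnKC //; case/andP: hj.
have [r' hr'] := drop_subtrees T.1 (0, t) hk.
have := congr1 size hr'; rewrite size_drop size_cat !size_subtrees -eq; lia.
Qed.

Lemma subtree_span t j : j < nnodes t -> j + nnodes (node t j).2 <= nnodes t.
Proof.
move=> hj; have := @subtree_nested t 0 j (nnodes_gt0 t).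
by rewrite node0 /=; apply; lia.
Qed.

Lemma contour_cons l c cs :
  contour (LNode l (c :: cs)) = up :: contour c ++ down :: contour (LNode l cs).
Proof. by rewrite /= cat_rcons. Qed.

Lemma contour_spec t : [/\ nup (contour t) = (nnodes t).-1,
  ndown (contour t) = (nnodes t).-1 & balanced (contour t)].
Proof.
elim/ltree_cons_ind: t => [l|l c cs [u1 d1 [e1 p1]] [u2 d2 [e2 p2]]].
  by split => //; split => // m; rewrite take0.
rewrite contour_cons nnodes_cons.
have g1 := nnodes_gt0 c; have g2 := nnodes_gt0 (LNode l cs).
move: (contour (LNode l cs)) (nnodes (LNode l cs)) u2 d2 e2 p2 g2 => R nR u2 d2 e2 p2 g2.
rewrite !(nup_cons, ndown_cons, nup_cat, ndown_cat) /=.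
split; [lia | lia | split].
  by rewrite !(nup_cons, ndown_cons, nup_cat, ndown_cat) /=; lia.
case=> [|m]; first by rewrite take0.
rewrite take_cons nup_cons ndown_cons /= take_cat; case: ifP => hm.
  by have := p1 m; lia.
case: (m - size (contour c)) => [|k] /=; first by rewrite cats0; lia.
by rewrite !(nup_cat, ndown_cat, nup_cons, ndown_cons) /=; have := p2 k; lia.
Qed.

Lemma contour_dyck_path t : dyck_path (nnodes t).-1 (contour t).
Proof. by have [eu _ hb] := contour_spec t; apply: dyck_path_balanced. Qed.

Lemma contour_subtree d t x0 i : 0 < i < nnodes t ->
  exists a b, contour t = a ++ up :: contour (nth x0 (subtrees d t) i).2 ++ down :: b
    /\ nup a = i.-1.
Proof.
rewrite -(size_subtrees d); case: i => [|i] // /= h.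
elim/ltree_cons_ind: t d i h => [l d i|l c cs IHc IHr d i]; first by [].
rewrite contour_cons subtrees_cons /= size_cat => h.
rewrite nth_cat; case: ifP => hi.
  case: i hi {h} => [|i] hi.
    by exists [::], (contour (LNode l cs)); rewrite subtrees_head.
  have [a [b [-> ha]]] := IHc d.+1 i hi.
  exists (up :: a), (b ++ down :: contour (LNode l cs)).
  by rewrite nup_cons ha /= -catA /= -catA.
have h' : (i - size (subtrees d.+1 c)).+1 < size (subtrees d (LNode l cs)).
  by rewrite [subtrees d (LNode l cs)]subtrees_head /=; move: hi => /negbT; lia.
have [a [b []]] := IHr d _ h'; rewrite [subtrees d (LNode l cs)]subtrees_head /= => -> ha.
exists (up :: contour c ++ down :: a), b; split; first by rewrite /= -!catA.
rewrite nup_cons nup_cat nup_cons ha /=.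
case: (contour_spec c) => -> _ _; rewrite size_subtrees in hi *.
by have := nnodes_gt0 c; move: hi => /negbT; lia.
Qed.

Lemma ell_contour t i : 0 < i < nnodes t ->
  ell (contour t) i = 2 * (nnodes (node t i).2).-1.
Proof.
move=> hi; have [a [b [-> ha]]] := contour_subtree 0 (0, t) hi.
rewrite -/(node t i); set T := (node t i).2.
have [eu ed hb] := contour_spec T.
rewrite (_ : i = (nup a).+1); last lia.
by rewrite ell_cat match_len_balanced_cat // size_nup_ndown eu ed; lia.
Qed.

Definition blocks (f : nat -> nat) (ks : seq nat) : seq bool :=
  flatten [seq up :: nseq (f k) down | k <- ks].

Lemma blocks_cat f a b : blocks f (a ++ b) = blocks f a ++ blocks f b.
Proof. by rewrite /blocks map_cat flatten_cat. Qed.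

Lemma blocks_cons f k ks : blocks f (k :: ks) = up :: nseq (f k) down ++ blocks f ks.
Proof. by []. Qed.

Lemma nup_blocks f ks : nup (blocks f ks) = size ks.
Proof.
elim: ks => // k ks IH.
by rewrite blocks_cons nup_cons nup_cat IH nup_nseq_down.
Qed.

Lemma ndown_blocks f ks : ndown (blocks f ks) = sumn (map f ks).
Proof.
elim: ks => // k ks IH.
by rewrite blocks_cons ndown_cons ndown_cat IH ndown_nseq_down.
Qed.

Lemma ndown_take_blocks f ks e : (forall q, sumn (map f (take q ks)) <= q + e) ->
  forall m, ndown (take m (blocks f ks)) <= nup (take m (blocks f ks)) + e.
Proof.
elim: ks e => [|k ks IH] e H m; first by rewrite /blocks /=; case: m.
have := H 1; rewrite /= take0 /= => h1.
rewrite blocks_cons; case: m => [|m]; first by rewrite take0.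
rewrite take_cons nup_cons ndown_cons /= take_cat size_nseq; case: ifP => hm.
  by rewrite take_nseq ?nup_nseq_down ?ndown_nseq_down; lia.
rewrite ndown_cat nup_cat nup_nseq_down ndown_nseq_down.
have hq q : sumn (map f (take q ks)) <= q + (e.+1 - f k).
  by have := H q.+1; rewrite /=; lia.
by have := IH _ hq (m - f k); lia.
Qed.

Lemma sumn_count_in (f : nat -> nat) J K : uniq K ->
  sumn [seq count (fun j => f j == k) J | k <- K] = count (fun j => f j \in K) J.
Proof.
elim: K => [|k K IH] /=; first by move=> _; elim: J.
case/andP => kK uK; rewrite IH //; clear IH.
by elim: J => //= j J IHJ; rewrite in_cons; case: eqP => [->|_] /=; [rewrite (negbTE kK)|]; lia.
Qed.

Lemma count_iota_lt m n q : count (fun j => j < q) (iota m n) <= q - m.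
Proof. by elim: n m => //= n IH m; have := IH m.+1; lia. Qed.

Lemma certificate_ge S j : j <= certificate S j.
Proof. exact: leq_addr. Qed.

Lemma sumn_cert_count S K : uniq K ->
  sumn (map (cert_count S) K) = count (fun j => certificate S j \in K) (iota 1 (nnodes S).-1).
Proof. exact: sumn_count_in. Qed.

Lemma sumn_cert_count_take S q :
  sumn (map (cert_count S) (take q (iota 1 (nnodes S).-1))) <= q.
Proof.
set n := (nnodes S).-1; rewrite take_iota sumn_cert_count ?iota_uniq // -/n.
have : count (fun j => certificate S j \in iota 1 (minn q n)) (iota 1 n)
    <= count (fun j => j < (minn q n).+1) (iota 1 n).
  by apply: sub_count => j /=; rewrite mem_iota; have := certificate_ge S j; lia.
by have := count_iota_lt 1 n (minn q n).+1; lia.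
Qed.

Section StickyTree.

Variable S : ltree.
Hypothesis stickyS : sticky S.

Lemma certificate_lt j : 0 < j < nnodes S -> certificate S j < j + nnodes (node S j).2.
Proof.
move=> hj; have [_ /(_ (node_depth_gt0 hj)) + _] := stickyS (proj2 (andP hj)).
by rewrite has_find /labels size_map -/(nnodes _) /certificate ltn_add2l.
Qed.

Lemma certificate_in_subtree i j : 0 < i < nnodes S ->
  i <= j < i + nnodes (node S i).2 -> i <= certificate S j < i + nnodes (node S i).2.
Proof.
move=> hi hj; have hiS : i < nnodes S by case/andP: hi.
have hjS : 0 < j < nnodes S by have := subtree_span hiS; lia.
have := subtree_nested hiS hj; have := certificate_lt hjS.
by have := certificate_ge S j; lia.
Qed.

Lemma Dword_dyck_path : dyck_path (nnodes S).-1 (Dword S).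
Proof.
set n := (nnodes S).-1; have hN : nnodes S = n.+1 by rewrite prednK ?nnodes_gt0.
have hD : Dword S = blocks (cert_count S) (iota 1 n) by [].
have eu : nup (Dword S) = n by rewrite hD nup_blocks size_iota.
have ed : ndown (Dword S) = n.
  rewrite hD ndown_blocks sumn_cert_count ?iota_uniq // -[RHS](size_iota 1 n) -count_predT.
  apply: eq_in_count => j; rewrite mem_iota => hj /=; rewrite mem_iota.
  have hjS : 0 < j < nnodes S by lia.
  have := certificate_lt hjS; have := subtree_span (proj2 (andP hjS)).
  by have := certificate_ge S j; lia.
apply: dyck_path_balanced => //; split=> [|m]; first by rewrite eu ed.
by rewrite -[nup _]addn0 hD; apply: ndown_take_blocks => q; rewrite addn0; apply: sumn_cert_count_take.
Qed.

Lemma iota_subtree_split i : 0 < i < nnodes S ->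
  iota 1 (nnodes S).-1 = iota 1 i.-1 ++ iota i (nnodes (node S i).2) ++
    iota (i + nnodes (node S i).2) ((nnodes S).-1 - i.-1 - nnodes (node S i).2).
Proof.
move=> hi; have := subtree_span (proj2 (andP hi)); set s := nnodes _.2 => hs.
have e : i = 1 + i.-1 by lia.
by rewrite [in iota i s]e [in iota (i + s) _]e -!iotaD; congr iota; lia.
Qed.

(* Every node of S_{v_i} certifies within S_{v_i}. *)
Lemma nnodes_le_sumn_cert_count i : 0 < i < nnodes S ->
  nnodes (node S i).2 <= sumn (map (cert_count S) (iota i (nnodes (node S i).2))).
Proof.
move=> hi; rewrite sumn_cert_count ?iota_uniq // (iota_subtree_split hi) !count_cat.
apply: leq_trans (leq_addl _ _); apply: leq_trans (leq_addr _ _).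
rewrite -[X in X <= _](size_iota i) -count_predT.
apply/eq_leq/eq_in_count => j; rewrite mem_iota => hj /=; rewrite mem_iota.
by have := certificate_in_subtree hi hj; lia.
Qed.

Lemma ell_Dword_le i : 0 < i < nnodes S ->
  ell (Dword S) i <= 2 * (nnodes (node S i).2).-1.
Proof.
move=> hi; set s := nnodes (node S i).2; set c := cert_count S.
have s0 : 0 < s by apply: nnodes_gt0.
set A := blocks c (iota 1 i.-1).
set X := nseq (c i) down ++ blocks c (iota i.+1 s.-1).
have hD : Dword S = A ++ up :: X ++ blocks c (iota (i + s) ((nnodes S).-1 - i.-1 - s)).
  rewrite /Dword -/(blocks c _) (iota_subtree_split hi) -/s -(prednK s0) !blocks_cat.
  by rewrite -/A /= -catA.
have uX : nup X = s.-1 by rewrite /X nup_cat nup_nseq_down nup_blocks size_iota.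
have dX : s <= ndown X.
  have := nnodes_le_sumn_cert_count hi; rewrite -/s -/c.
  by rewrite /X ndown_cat ndown_nseq_down ndown_blocks -(prednK s0).
rewrite hD (_ : i = (nup A).+1); last by rewrite nup_blocks size_iota; lia.
by rewrite ell_cat -uX; apply: match_len_cat_le; lia.
Qed.

End StickyTree.

Theorem proposition4p1 (S : ltree) (n : nat) :
  sticky S -> nnodes S = n.+1 -> 1 <= n ->
  [/\ dyck_path n (Dword S), dyck_path n (contour S)
    & tamari_le n (Dword S) (contour S)].
Proof.
move=> stickyS hN _; have -> : n = (nnodes S).-1 by rewrite hN.
split; [exact: (Dword_dyck_path stickyS) | exact: contour_dyck_path |].
move=> i hi; rewrite ell_contour; last by lia.
by apply: (ell_Dword_le stickyS); lia.
Qed.
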